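(* Let $\ell\ge 6$ and $w\ge 0$ be integers, let $A=\langle A_1,\dots,A_\ell\rangle$ and $B=\langle B_1,\dots,B_\ell\rangle$ be real sequences, and let $\delta:\mathbb{R}\times\mathbb{R}\to[0,\infty)$ be a symmetric pairwise cost function with $\delta(a,a)=0$ for all $a$. Suppose that for all reals $a,b,x,y$ with $a\le x\le y\le b$ or $a\ge x\ge y\ge b$ we have $\delta(a,b)\ge \delta(a,y)+\delta(b,x)-\delta(x,y)$. Define $$\mathrm{LB\_Webb}_w(A,B)=\mathrm{minlrpaths}(A,B)+\sum_{i=4}^{\ell-3}\kappa_i+\sum_{i=4}^{\ell-3}\gamma_i,$$ where $\kappa_i=\delta(A_i,\mathbb{U}^B_i)$ if $A_i>\mathbb{U}^B_i$, $\kappa_i=\delta(A_i,\mathbb{L}^B_i)$ if $A_i<\mathbb{L}^B_i$, and $\kappa_i=0$ otherwise; and $\gamma_i$ is given by the first applicable case among: (1) $\delta(B_i,\mathbb{U}^A_i)$ if $\mathrm{freeAbove}(i)$ and $B_i>\mathbb{U}^A_i$; (2) $\delta(B_i,\mathbb{L}^A_i)$ if $\mathrm{freeBelow}(i)$ and $B_i<\mathbb{L}^A_i$; (3) $\delta(B_i,\mathbb{U}^A_i)-\delta(\mathbb{U}^{\mathbb{L}^B}_i,\mathbb{U}^A_i)$ if not $\mathrm{freeAbove}(i)$ and $B_i>\mathbb{U}^{\mathbb{L}^B}_i>\mathbb{U}^A_i$; (4) $\delta(B_i,\mathbb{L}^A_i)-\delta(\mathbb{L}^{\mathbb{U}^B}_i,\mathbb{L}^A_i)$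 if not $\mathrm{freeBelow}(i)$ and $B_i<\mathbb{L}^{\mathbb{U}^B}_i<\mathbb{L}^A_i$; (5) $0$ otherwise. Then $\mathrm{LB\_Webb}_w(A,B)\le\mathrm{DTW}_w(A,B)$.
   Context: A warping path of $A$ and $B$ is a sequence of pairs $(i_1,j_1),\dots,(i_P,j_P)$ with $(i_1,j_1)=(1,1)$, $(i_P,j_P)=(\ell,\ell)$, and for each $1<k\le P$, $(i_{k-1},j_{k-1})\in\{(i_k-1,j_k),(i_k,j_k-1),(i_k-1,j_k-1)\}$. $\mathrm{DTW}_w(A,B)$ is the minimum of $\sum_{k=1}^P\delta(A_{i_k},B_{j_k})$ over all warping paths all of whose pairs satisfy $i_k-w\le j_k\le i_k+w$. For a real sequence $S$ of length $\ell$, its upper and lower envelopes with window $w$ are $\mathbb{U}^S_i=\max_{\max(1,i-w)\le j\le\min(\ell,i+w)}S_j$ and $\mathbb{L}^S_i=\min_{\max(1,i-w)\le j\le\min(\ell,i+w)}S_j$. $\mathbb{U}^{\mathbb{L}^B}$ is the upper envelope of the lower envelope of $B$, $\mathbb{L}^{\mathbb{U}^B}$ the lower envelope of the upper envelope of $B$, $\mathbb{L}^{\mathbb{U}^A}$ the lower envelope of the upper envelope of $A$, and $\mathbb{U}^{\mathbb{L}^A}$ the upper envelope of the lower envelope of $A$ (all with window $w$). $\mathrm{freeAbove}(j)$ holds iff for every $i$ with $4\le i\le\ell-3$ and $j-w\le i\le j+w$: $\mathbb{L}^B_i\le A_i\le\mathbb{U}^B_i$, or $A_i<\mathbb{L}^B_i\le\mathbb{L}^{\mathbb{U}^A}_i$.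 $\mathrm{freeBelow}(j)$ holds iff for every $i$ with $4\le i\le\ell-3$ and $j-w\le i\le j+w$: $\mathbb{L}^B_i\le A_i\le\mathbb{U}^B_i$, or $A_i>\mathbb{U}^B_i\ge\mathbb{U}^{\mathbb{L}^A}_i$. Writing $\delta_{i,j}=\delta(A_i,B_j)$, $\mathrm{minlrpaths}(A,B)=\delta_{1,1}+\delta_{\ell,\ell}+\min[\delta_{1,2}+\delta_{1,3},\ \delta_{1,2}+\delta_{2,3},\ \delta_{2,2}+\delta_{2,3},\ \delta_{2,2}+\delta_{3,3},\ \delta_{2,2}+\delta_{3,2},\ \delta_{2,1}+\delta_{3,2},\ \delta_{2,1}+\delta_{3,1}]+\min[\delta_{\ell,\ell-1}+\delta_{\ell,\ell-2},\ \delta_{\ell,\ell-1}+\delta_{\ell-1,\ell-2},\ \delta_{\ell-1,\ell-1}+\delta_{\ell-1,\ell-2},\ \delta_{\ell-1,\ell-1}+\delta_{\ell-2,\ell-2},\ \delta_{\ell-1,\ell-1}+\delta_{\ell-2,\ell-1},\ \delta_{\ell-1,\ell}+\delta_{\ell-2,\ell-1},\ \delta_{\ell-1,\ell}+\delta_{\ell-2,\ell}]$. *)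

(* concrete reals R, sequences as functions nat -> R, 1-based. *)
From Stdlib Require Import Reals Lra List Arith ClassicalEpsilon.
Import ListNotations.
Open Scope R_scope.

Definition pick (P : Prop) : {P} + {~ P} := excluded_middle_informative P.

Section Defs.
Variables (l w : nat).

Definition win_lo (i : nat) : nat := Nat.max 1 (i - w).
Definition win_hi (i : nat) : nat := Nat.min l (i + w).
Definition win (i : nat) : list nat :=
  seq (win_lo i) (S (win_hi i) - win_lo i).

Definition Uenv (S : nat -> R) (i : nat) : R :=
  fold_right Rmax (S (win_lo i)) (map S (win i)).
Definition Lenv (S : nat -> R) (i : nat) : R :=
  fold_right Rmin (S (win_lo i)) (map S (win i)).

Variables (delta : R -> R -> R) (A B : nat -> R).

Definition freeAbove (j : nat) : Prop :=
  forall i, (4 <= i)%nat -> (i <= l - 3)%nat -> (j <= i + w)%nat -> (i <= j + w)%nat ->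
    (Lenv B i <= A i <= Uenv B i) \/ (A i < Lenv B i /\ Lenv B i <= Lenv (Uenv A) i).

Definition freeBelow (j : nat) : Prop :=
  forall i, (4 <= i)%nat -> (i <= l - 3)%nat -> (j <= i + w)%nat -> (i <= j + w)%nat ->
    (Lenv B i <= A i <= Uenv B i) \/ (A i > Uenv B i /\ Uenv B i >= Uenv (Lenv A) i).

Definition d (i j : nat) : R := delta (A i) (B j).

Definition min_list (x : R) (xs : list R) : R := fold_right Rmin x xs.

Definition minlrpaths : R :=
  d 1 1 + d l l
  + min_list (d 1 2 + d 1 3)
      [d 1 2 + d 2 3; d 2 2 + d 2 3; d 2 2 + d 3 3; d 2 2 + d 3 2;
       d 2 1 + d 3 2; d 2 1 + d 3 1]
  + min_list (d l (l-1) + d l (l-2))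
      [d l (l-1) + d (l-1) (l-2); d (l-1) (l-1) + d (l-1) (l-2);
       d (l-1) (l-1) + d (l-2) (l-2); d (l-1) (l-1) + d (l-2) (l-1);
       d (l-1) l + d (l-2) (l-1); d (l-1) l + d (l-2) l].

Definition kappa (i : nat) : R :=
  if pick (A i > Uenv B i) then delta (A i) (Uenv B i)
  else if pick (A i < Lenv B i) then delta (A i) (Lenv B i)
  else 0.

Definition gamma (i : nat) : R :=
  if pick (freeAbove i /\ B i > Uenv A i) then delta (B i) (Uenv A i)
  else if pick (freeBelow i /\ B i < Lenv A i) then delta (B i) (Lenv A i)
  else if pick (~ freeAbove i /\ B i > Uenv (Lenv B) i /\ Uenv (Lenv B) i > Uenv A i)
    then delta (B i) (Uenv A i) - delta (Uenv (Lenv B) i) (Uenv A i)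
  else if pick (~ freeBelow i /\ B i < Lenv (Uenv B) i /\ Lenv (Uenv B) i < Lenv A i)
    then delta (B i) (Lenv A i) - delta (Lenv (Uenv B) i) (Lenv A i)
  else 0.

Definition sum_mid (f : nat -> R) : R :=
  fold_right Rplus 0 (map f (seq 4 (l - 6))).

Definition LB_Webb : R := minlrpaths + sum_mid kappa + sum_mid gamma.

Definition valid_step (p q : nat * nat) : Prop :=
  let (i', j') := p in let (i, j) := q in
  (i = S i' /\ j = j') \/ (i = i' /\ j = S j') \/ (i = S i' /\ j = S j').

Fixpoint steps_ok (p : nat * nat) (ps : list (nat * nat)) : Prop :=
  match ps with
  | [] => True
  | q :: qs => valid_step p q /\ steps_ok q qs
  end.

Definition warping_path (P : list (nat * nat)) : Prop :=
  exists rest, P = (1%nat, 1%nat) :: rest /\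
    last P (1%nat, 1%nat) = (l, l) /\ steps_ok (1%nat, 1%nat) rest.

Definition in_window (P : list (nat * nat)) : Prop :=
  Forall (fun p : nat * nat => let (i, j) := p in (j <= i + w)%nat /\ (i <= j + w)%nat) P.

Definition path_cost (P : list (nat * nat)) : R :=
  fold_right Rplus 0 (map (fun p : nat * nat => let (i, j) := p in d i j) P).

Definition is_DTW (D : R) : Prop :=
  (exists P, warping_path P /\ in_window P /\ path_cost P = D) /\
  (forall P, warping_path P -> in_window P -> D <= path_cost P).

End Defs.

(* Along the
   path we accumulate a potential with three parts: the first two cells after
   (1,1) pay for the left minimum of minlrpaths, the last three cells pay for
   the right minimum and δ(l,l), and a cell (i,j) of the middle region pays
   κ_i when the path enters row i and γ_j when it enters column j.  The one
   non-trivial inequality is κ_i + γ_j <= δ(A_i,B_j) for a cell in the window.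
   The window puts B_j inside the B-envelope at i and A_i inside the A-envelope
   at j; in the freeAbove/freeBelow cases freeness moreover puts L^B_i between
   A_i and U^A_j (resp. U^B_i between L^A_j and A_i), so κ_i and γ_j measure
   disjoint pieces of the segment from A_i to B_j, and in the two remaining
   cases the four-point condition on δ absorbs the subtracted term of γ_j. *)

From Pilot Require Import Defs.
From Stdlib Require Import Reals Lra Lia List.
Import ListNotations.
Open Scope R_scope.

Lemma last_cons_default {T : Type} (p y : T) (r : list T) : last (y :: r) p = last r y.
Proof.
  revert p y; induction r as [|z r IH]; intros p y; [reflexivity|].
  change (last (z :: r) p = last (z :: r) y); rewrite !IH; reflexivity.
Qed.

Lemma steps_ok_bounds p ps : steps_ok p ps -> forall q, In q ps ->
  (fst p <= fst q <= fst (last ps p))%nat /\ (snd p <= snd q <= snd (last ps p))%nat.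
Proof.
  revert p; induction ps as [|y r IH]; intros p Hs q Hq; [destruct Hq|].
  destruct Hs as [Hv Hs]; rewrite last_cons_default.
  assert (Hy : (fst y <= fst (last r y))%nat /\ (snd y <= snd (last r y))%nat).
  { destruct r as [|z r]; [simpl; lia|].
    destruct (IH y Hs z (or_introl eq_refl)); lia. }
  destruct p as [a b], y as [c e]; simpl in Hv, Hy |- *.
  destruct Hq as [<-|Hq]; [simpl; lia|].
  destruct (IH (c, e) Hs q Hq); simpl in *; lia.
Qed.

Lemma fold_max_ge (xs : list R) x0 x : In x xs -> x <= fold_right Rmax x0 xs.
Proof.
  induction xs as [|y ys IH]; simpl; [tauto|].
  intros [<-|H]; [apply Rmax_l | eapply Rle_trans; [apply IH, H | apply Rmax_r]].
Qed.

Lemma fold_min_le (xs : list R) x0 x : In x xs -> fold_right Rmin x0 xs <= x.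
Proof.
  induction xs as [|y ys IH]; simpl; [tauto|].
  intros [<-|H]; [apply Rmin_l | eapply Rle_trans; [apply Rmin_r | apply IH, H]].
Qed.

Lemma min_list_le x xs y : In y (x :: xs) -> min_list x xs <= y.
Proof.
  intros [<-|H]; [|apply fold_min_le, H].
  induction xs as [|z zs IH]; simpl; [lra|].
  eapply Rle_trans; [apply Rmin_r | exact IH].
Qed.

Lemma min_list_ge c x xs : (forall y, In y (x :: xs) -> c <= y) -> c <= min_list x xs.
Proof.
  unfold min_list; revert x; induction xs as [|z zs IH]; intros x H; simpl.
  - apply H; left; reflexivity.
  - apply Rmin_glb; [apply H; simpl; auto|].
    apply IH; intros y [<-|Hy]; apply H; simpl; auto.
Qed.

Lemma fold_right_Rplus_init x ys : fold_right Rplus x ys = fold_right Rplus 0 ys + x.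
Proof. induction ys as [|y ys IH]; simpl; lra. Qed.

Section LowerBound.

Variables (l w : nat) (delta : R -> R -> R) (A B : nat -> R).
Hypothesis Hl : (6 <= l)%nat.
Hypothesis Hnn : forall a b, 0 <= delta a b.
Hypothesis Hsym : forall a b, delta a b = delta b a.
Hypothesis Hzero : forall a, delta a a = 0.
Hypothesis Htri : forall a b x y, (a <= x <= y /\ y <= b) \/ (a >= x /\ x >= y /\ y >= b) ->
  delta a b >= delta a y + delta b x - delta x y.

Local Notation d := (Defs.d delta A B).
Local Notation U := (Uenv l w).
Local Notation L := (Lenv l w).
Local Notation kappa := (Defs.kappa l w delta A B).
Local Notation gamma := (Defs.gamma l w delta A B).

Ltac cost_nonneg :=
  repeat match goal with
  | |- context [d ?x ?y] =>
      lazymatch goal with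
      | _ : 0 <= d x y |- _ => fail
      | _ => pose proof (Hnn (A x) (B y) : 0 <= d x y)
      end
  end.

Lemma delta_between a y b : a <= y <= b \/ b <= y <= a -> delta a y + delta b y <= delta a b.
Proof.
  intros H; assert (T := Htri a b y y ltac:(lra)); rewrite Hzero in T; lra.
Qed.

Lemma delta_le_between a y b : a <= y <= b \/ b <= y <= a -> delta a y <= delta a b.
Proof. intros H; generalize (delta_between a y b H) (Hnn b y); lra. Qed.

Definition window_cell (i j : nat) : Prop :=
  (1 <= i <= l)%nat /\ (1 <= j <= l)%nat /\ (j <= i + w)%nat /\ (i <= j + w)%nat.

Lemma window_cell_sym i j : window_cell i j -> window_cell j i.
Proof. unfold window_cell; lia. Qed.

Lemma env_bounds (S : nat -> R) i j : window_cell i j -> L S i <= S j <= U S i.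
Proof.
  intros Hc; assert (Hin : In (S j) (map S (win l w i))).
  { apply in_map; unfold win, win_lo, win_hi, window_cell in *; apply in_seq; lia. }
  split; [apply fold_min_le | apply fold_max_ge]; exact Hin.
Qed.

Lemma free_above_le i j : window_cell i j -> freeAbove l w A B j ->
  (4 <= i <= l - 3)%nat -> A i < L B i -> L B i <= U A j.
Proof.
  intros Hc Hfree Hi Hlt; unfold window_cell in Hc.
  destruct (Hfree i) as [Hin|[_ Hle]]; try lia; [lra|].
  pose proof (env_bounds (U A) i j ltac:(unfold window_cell; lia)); lra.
Qed.

Lemma free_below_ge i j : window_cell i j -> freeBelow l w A B j ->
  (4 <= i <= l - 3)%nat -> U B i < A i -> L A j <= U B i.
Proof.
  intros Hc Hfree Hi Hgt; unfold window_cell in Hc.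
  destruct (Hfree i) as [Hin|[_ Hge]]; try lia; [lra|].
  pose proof (env_bounds (L A) i j ltac:(unfold window_cell; lia)); lra.
Qed.

Lemma kappa_nonneg i : 0 <= kappa i.
Proof.
  unfold Defs.kappa; destruct (pick _); [apply Hnn|]; destruct (pick _); [apply Hnn | lra].
Qed.

Lemma gamma_nonneg j : 0 <= gamma j.
Proof.
  unfold Defs.gamma.
  destruct (pick _); [apply Hnn|]; destruct (pick _); [apply Hnn|].
  destruct (pick _) as [[_ [H1 H2]]|].
  { pose proof (delta_between (B j) (U (L B) j) (U A j) ltac:(lra)).
    rewrite (Hsym (U A j)) in *; pose proof (Hnn (B j) (U (L B) j)); lra. }
  destruct (pick _) as [[_ [H1 H2]]|]; [|lra].
  pose proof (delta_between (B j) (L (U B) j) (L A j) ltac:(lra)).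
  rewrite (Hsym (L A j)) in *; pose proof (Hnn (B j) (L (U B) j)); lra.
Qed.

Definition mid (f : nat -> R) (i : nat) : R :=
  if ((4 <=? i) && (i <=? l - 3))%bool then f i else 0.

Lemma mid_inside f i : (4 <= i <= l - 3)%nat -> mid f i = f i.
Proof.
  intros H; unfold mid; destruct (Nat.leb_spec 4 i), (Nat.leb_spec i (l - 3)); simpl; lia || reflexivity.
Qed.

Lemma mid_outside f i : (i < 4 \/ l - 3 < i)%nat -> mid f i = 0.
Proof.
  intros H; unfold mid; destruct (Nat.leb_spec 4 i), (Nat.leb_spec i (l - 3)); simpl; lia || reflexivity.
Qed.

Lemma mid_cases f i : ((4 <= i <= l - 3)%nat /\ mid f i = f i) \/ mid f i = 0.
Proof.
  destruct (Nat.lt_ge_cases i 4), (Nat.lt_ge_cases (l - 3) i);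
    [right; apply mid_outside; lia.. | left; split; [lia | apply mid_inside; lia]].
Qed.

Lemma mid_nonneg f i : (forall k, 0 <= f k) -> 0 <= mid f i.
Proof. intros Hf; destruct (mid_cases f i) as [[_ ->]| ->]; [apply Hf | lra]. Qed.

Lemma mid_kappa_le i c :
  ((4 <= i <= l - 3)%nat -> (U B i < A i -> c <= U B i) /\ (A i < L B i -> L B i <= c)) ->
  mid kappa i <= delta (A i) c.
Proof.
  intros Hc; destruct (mid_cases kappa i) as [[Hi ->]| ->]; [|apply Hnn].
  destruct (Hc Hi) as [Hup Hlo]; unfold Defs.kappa.
  destruct (pick _) as [Hgt|_]; [apply delta_le_between; specialize (Hup Hgt); lra|].
  destruct (pick _) as [Hlt|_]; [apply delta_le_between; specialize (Hlo Hlt); lra|].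
  apply Hnn.
Qed.

Lemma mid_kappa_le_cost i j : window_cell i j -> mid kappa i <= d i j.
Proof.
  intros Hc; pose proof (env_bounds B i j Hc).
  apply mid_kappa_le; intros _; split; intros; lra.
Qed.

Lemma mid_kappa_gamma_le i j : window_cell i j -> mid kappa i + gamma j <= d i j.
Proof.
  intros Hc; pose proof (window_cell_sym i j Hc) as Hc'; unfold Defs.d.
  pose proof (env_bounds B i j Hc) as HB; pose proof (env_bounds A j i Hc') as HA.
  pose proof (env_bounds (L B) j i Hc') as HLB; pose proof (env_bounds (U B) j i Hc') as HUB.
  unfold Defs.gamma; destruct (pick _) as [[Hfree Hgt]|_].
  { assert (mid kappa i <= delta (A i) (U A j)).
    { apply mid_kappa_le; intros Hi; split; intros; [lra | now apply free_above_le]. }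
    pose proof (delta_between (A i) (U A j) (B j) ltac:(lra)); lra. }
  destruct (pick _) as [[Hfree Hlt]|_].
  { assert (mid kappa i <= delta (A i) (L A j)).
    { apply mid_kappa_le; intros Hi; split; intros; [now apply free_below_ge | lra]. }
    pose proof (delta_between (A i) (L A j) (B j) ltac:(lra)); lra. }
  destruct (pick _) as [[_ [H1 H2]]|_].
  { assert (mid kappa i <= delta (A i) (U (L B) j)).
    { apply mid_kappa_le; intros _; split; intros; lra. }
    pose proof (Htri (A i) (B j) (U A j) (U (L B) j) ltac:(left; lra)).
    rewrite (Hsym (U (L B) j)); lra. }
  destruct (pick _) as [[_ [H1 H2]]|_].
  { assert (mid kappa i <= delta (A i) (L (U B) j)).
    { apply mid_kappa_le; intros _; split; intros; lra. }
    pose proof (Htri (A i) (B j) (L A j) (L (U B) j) ltac:(right; lra)).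
    rewrite (Hsym (L (U B) j)); lra. }
  rewrite Rplus_0_r; apply mid_kappa_le_cost, Hc.
Qed.

Lemma mid_share_le i j : window_cell i j -> mid kappa i + mid gamma j <= d i j.
Proof.
  intros Hc; destruct (mid_cases gamma j) as [[_ ->]| ->].
  - apply mid_kappa_gamma_le, Hc.
  - rewrite Rplus_0_r; apply mid_kappa_le_cost, Hc.
Qed.

Definition min_left : R :=
  min_list (d 1 2 + d 1 3)
    [d 1 2 + d 2 3; d 2 2 + d 2 3; d 2 2 + d 3 3; d 2 2 + d 3 2;
     d 2 1 + d 3 2; d 2 1 + d 3 1].

Definition min_right : R :=
  min_list (d l (l-1) + d l (l-2))
    [d l (l-1) + d (l-1) (l-2); d (l-1) (l-1) + d (l-1) (l-2);
     d (l-1) (l-1) + d (l-2) (l-2); d (l-1) (l-1) + d (l-2) (l-1);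
     d (l-1) l + d (l-2) (l-1); d (l-1) l + d (l-2) l].

Lemma minlrpaths_split : minlrpaths l delta A B = d 1 1 + d l l + min_left + min_right.
Proof. reflexivity. Qed.

Lemma min_left_spec :
  0 <= min_left /\ min_left <= d 1 2 + d 1 3 /\ min_left <= d 1 2 + d 2 3 /\
  min_left <= d 2 2 + d 2 3 /\ min_left <= d 2 2 + d 3 3 /\ min_left <= d 2 2 + d 3 2 /\
  min_left <= d 2 1 + d 3 2 /\ min_left <= d 2 1 + d 3 1.
Proof.
  unfold min_left; split.
  - apply min_list_ge; intros y Hy; simpl in Hy.
    repeat destruct Hy as [<-|Hy]; [..|destruct Hy]; cost_nonneg; lra.
  - repeat split; apply min_list_le; simpl; tauto.
Qed.

Lemma min_right_spec :
  0 <= min_right /\ min_right <= d l (l-1) + d l (l-2) /\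
  min_right <= d l (l-1) + d (l-1) (l-2) /\ min_right <= d (l-1) (l-1) + d (l-1) (l-2) /\
  min_right <= d (l-1) (l-1) + d (l-2) (l-2) /\ min_right <= d (l-1) (l-1) + d (l-2) (l-1) /\
  min_right <= d (l-1) l + d (l-2) (l-1) /\ min_right <= d (l-1) l + d (l-2) l.
Proof.
  unfold min_right; split.
  - apply min_list_ge; intros y Hy; simpl in Hy.
    repeat destruct Hy as [<-|Hy]; [..|destruct Hy]; cost_nonneg; lra.
  - repeat split; apply min_list_le; simpl; tauto.
Qed.

Definition start_credit (i j : nat) : R :=
  match i, j with
  | 1, 1 => 0
  | 1, 2 => d 1 2
  | 2, 1 => d 2 1
  | 2, 2 => d 2 2
  | _, _ => min_left
  end.

(* Cells are located by their distance to the corner (l,l); coordinates beyond l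
   never occur on a path. *)
Definition end_credit (i j : nat) : R :=
  match (l - i)%nat, (l - j)%nat with
  | 0, 0 => min_right + d l l
  | 0, 1 | 1, 0 | 1, 1 => min_right
  | 0, 2 | 1, 2 | 2, 0 | 2, 1 | 2, 2 => d i j
  | _, _ => 0
  end.

Definition mid_credit (i j : nat) : R := sum_f_R0 (mid kappa) i + sum_f_R0 (mid gamma) j.

Definition potential (i j : nat) : R := start_credit i j + mid_credit i j + end_credit i j.

Lemma start_credit_step i j i' j' :
  valid_step (i, j) (i', j') -> start_credit i' j' <= start_credit i j + d i' j'.
Proof.
  pose proof min_left_spec.
  intros [[-> ->]|[[-> ->]|[-> ->]]];
    destruct i as [|[|[|i]]]; destruct j as [|[|[|j]]]; simpl; cost_nonneg; lra.
Qed.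

Lemma start_credit_stable i j i' j' : valid_step (i, j) (i', j') ->
  (4 <= i' \/ 4 <= j')%nat -> start_credit i' j' = start_credit i j.
Proof.
  assert (Hlate : forall x y, (3 <= x \/ 3 <= y)%nat -> start_credit x y = min_left).
  { intros x y H; destruct x as [|[|[|x]]], y as [|[|[|y]]]; try reflexivity; lia. }
  intros Hs H; rewrite !Hlate; [reflexivity | destruct Hs as [[? ?]|[[? ?]|[? ?]]] | ]; lia.
Qed.

Lemma end_credit_early i j : (i < l - 2 \/ j < l - 2)%nat -> end_credit i j = 0.
Proof.
  intros H; unfold end_credit; destruct H as [H|H].
  - replace (l - i)%nat with (S (S (S (l - i - 3)))) by lia; reflexivity.
  - replace (l - j)%nat with (S (S (S (l - j - 3)))) by lia.
    destruct (l - i)%nat as [|[|[|]]]; reflexivity.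
Qed.

Lemma end_credit_nonneg i j : 0 <= end_credit i j.
Proof.
  pose proof min_right_spec; unfold end_credit.
  destruct (l - i)%nat as [|[|[|]]], (l - j)%nat as [|[|[|]]]; cost_nonneg; lra.
Qed.

Lemma end_credit_step i j i' j' : valid_step (i, j) (i', j') -> (i' <= l)%nat -> (j' <= l)%nat ->
  end_credit i' j' <= end_credit i j + d i' j'.
Proof.
  intros Hs Hi Hj.
  assert (Hsteps : ((l - i = S (l - i') /\ l - j = l - j') \/ (l - i = l - i' /\ l - j = S (l - j')) \/
                    (l - i = S (l - i') /\ l - j = S (l - j')))%nat)
    by (destruct Hs as [[-> ->]|[[-> ->]|[-> ->]]]; lia).
  assert (Hi0 : (i <= l)%nat) by (destruct Hs as [[? ?]|[[? ?]|[? ?]]]; lia).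
  assert (Hj0 : (j <= l)%nat) by (destruct Hs as [[? ?]|[[? ?]|[? ?]]]; lia).
  (* Writing every coordinate as l minus its distance to the corner makes end_credit
     compute and gives the cost terms the shape they have in min_right. *)
  assert (Hdist : forall x, (x <= l)%nat -> exists a, x = (l - a)%nat /\ (l - x = a)%nat).
  { intros x Hx; exists (l - x)%nat; split; lia. }
  clear Hs.
  destruct (Hdist i' Hi) as [a [-> Ha]], (Hdist j' Hj) as [b [-> Hb]],
           (Hdist i Hi0) as [a0 [-> Ha0]], (Hdist j Hj0) as [b0 [-> Hb0]].
  unfold end_credit; rewrite Ha, Hb, Ha0, Hb0 in *.
  pose proof min_right_spec.
  destruct Hsteps as [[-> ->]|[[-> ->]|[-> ->]]];
    destruct a as [|[|[|a]]]; destruct b as [|[|[|b]]];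
    rewrite ?Nat.sub_0_r; cost_nonneg; lra.
Qed.

Lemma mid_credit_step i j i' j' : valid_step (i, j) (i', j') ->
  mid_credit i' j' <= mid_credit i j + mid kappa i' + mid gamma j'.
Proof.
  pose proof (mid_nonneg kappa i' kappa_nonneg); pose proof (mid_nonneg gamma j' gamma_nonneg).
  unfold mid_credit; intros [[-> ->]|[[-> ->]|[-> ->]]]; cbn [sum_f_R0]; lra.
Qed.

(* A cell pays for at most one of the start box [1,3]^2, the end box [l-2,l]^2 and
   the middle rows and columns [4,l-3]; these are disjoint because l >= 6. *)
Lemma potential_step i j i' j' : valid_step (i, j) (i', j') -> window_cell i' j' ->
  potential i' j' <= potential i j + d i' j'.
Proof.
  intros Hs Hc; unfold potential.
  pose proof (mid_credit_step i j i' j' Hs).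
  unfold window_cell in Hc.
  assert (Hregion : (i' <= 3 /\ j' <= 3)%nat \/ (l - 2 <= i' /\ l - 2 <= j')%nat \/
                    ((4 <= i' \/ 4 <= j') /\ (i' < l - 2 \/ j' < l - 2))%nat) by lia.
  destruct Hregion as [Hreg|[Hreg|[Hfar Hnear]]].
  - rewrite (mid_outside kappa i'), (mid_outside gamma j') in * by lia.
    rewrite (end_credit_early i' j') by lia.
    pose proof (start_credit_step i j i' j' Hs); pose proof (end_credit_nonneg i j); lra.
  - rewrite (mid_outside kappa i'), (mid_outside gamma j') in * by lia.
    rewrite (start_credit_stable i j i' j' Hs) by lia.
    pose proof (end_credit_step i j i' j' Hs ltac:(lia) ltac:(lia)); lra.
  - rewrite (start_credit_stable i j i' j' Hs Hfar).
    rewrite (end_credit_early i' j' Hnear); pose proof (end_credit_nonneg i j).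
    pose proof (mid_share_le i' j' ltac:(unfold window_cell; lia)); lra.
Qed.

Lemma potential_path ps p : steps_ok p ps ->
  Forall (fun q => window_cell (fst q) (snd q)) ps ->
  potential (fst (last ps p)) (snd (last ps p)) <=
    potential (fst p) (snd p) + path_cost delta A B ps.
Proof.
  revert p; induction ps as [|[i' j'] r IH]; intros [i j] Hs Hc.
  - unfold path_cost; simpl; lra.
  - destruct Hs as [Hv Hs]; inversion Hc as [|? ? Hc1 Hcr]; subst.
    rewrite last_cons_default.
    pose proof (IH (i', j') Hs Hcr); pose proof (potential_step i j i' j' Hv Hc1).
    unfold path_cost in *; simpl in *; lra.
Qed.

Lemma sum_mid_eq f : sum_mid l f = sum_f_R0 (mid f) l.
Proof.
  assert (Hfront : forall m, (m <= l - 6)%nat ->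
    sum_f_R0 (mid f) (3 + m) = fold_right Rplus 0 (map f (seq 4 m))).
  { induction m as [|m IH]; intros Hm.
    - simpl; rewrite !mid_outside by lia; lra.
    - rewrite Nat.add_succ_r, tech5, IH by lia.
      rewrite seq_S, map_app, fold_right_app; cbn [map fold_right].
      rewrite (fold_right_Rplus_init (f _ + 0)).
      rewrite mid_inside by lia; replace (4 + m)%nat with (S (3 + m)) by lia; lra. }
  assert (Hback : forall k, (l - 3 <= k <= l)%nat -> sum_f_R0 (mid f) k = sum_f_R0 (mid f) (l - 3)).
  { induction k as [|k IH]; intros Hk; [exfalso; lia|].
    destruct (Nat.eq_dec (S k) (l - 3)) as [-> | Hne]; [reflexivity|].
    rewrite tech5, IH, mid_outside by lia; lra. }
  unfold sum_mid; rewrite Hback, <- Hfront by lia; f_equal; lia.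
Qed.

Lemma potential_origin : potential 1 1 = 0.
Proof.
  unfold potential, mid_credit; simpl.
  rewrite !mid_outside, end_credit_early by lia; lra.
Qed.

Lemma potential_corner : potential l l = LB_Webb l w delta A B - d 1 1.
Proof.
  unfold potential, LB_Webb, mid_credit, end_credit; rewrite minlrpaths_split, !sum_mid_eq.
  rewrite Nat.sub_diag.
  replace (start_credit l l) with min_left
    by (destruct l as [|[|[|k]]]; [lia..|reflexivity]).
  lra.
Qed.

Lemma LB_Webb_le_path_cost P : warping_path l P -> in_window w P ->
  LB_Webb l w delta A B <= path_cost delta A B P.
Proof.
  intros [rest [-> [Hlast Hsteps]]] Hwin.
  rewrite last_cons_default in Hlast.
  assert (Hcells : Forall (fun q => window_cell (fst q) (snd q)) rest).
  { apply Forall_forall; intros [i j] Hq.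
    pose proof (steps_ok_bounds _ _ Hsteps _ Hq) as Hb; rewrite Hlast in Hb.
    inversion Hwin as [|? ? _ Hw]; rewrite Forall_forall in Hw.
    specialize (Hw (i, j) Hq); unfold window_cell; simpl in *; lia. }
  pose proof (potential_path rest (1, 1)%nat Hsteps Hcells) as H.
  rewrite Hlast in H; simpl in H; rewrite potential_origin, potential_corner in H.
  unfold path_cost in *; simpl; lra.
Qed.

End LowerBound.

Theorem theorem2 (l w : nat) (A B : nat -> R) (delta : R -> R -> R)
  (Hl : (6 <= l)%nat)
  (Hnn : forall a b, 0 <= delta a b)
  (Hsym : forall a b, delta a b = delta b a)
  (Hzero : forall a, delta a a = 0)
  (Htri : forall a b x y, (a <= x <= y /\ y <= b) \/ (a >= x /\ x >= y /\ y >= b) ->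
           delta a b >= delta a y + delta b x - delta x y)
  (D : R) (HD : is_DTW l w delta A B D) :
  LB_Webb l w delta A B <= D.
Proof.
  destruct HD as [[P [HP [Hwin <-]]] _].
  exact (LB_Webb_le_path_cost l w delta A B Hl Hnn Hsym Hzero Htri P HP Hwin).
Qed.
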